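(* Let $\mathcal L$ be a finite atomic lattice. Identify each $x\in\bar{\mathcal L}$ with the simplex $\{a\in\mathcal A(\mathcal L): a\le x\}$ of $\Gamma(\mathcal L)$; this identifies $\bar{\mathcal L}$ with a subposet of $\mathcal F(\Gamma(\mathcal L))$ and hence $\Delta(\bar{\mathcal L})$ with a subcomplex of ${\rm Bd}(\Gamma(\mathcal L))$. Then ${\rm Bd}(\Gamma(\mathcal L))$ collapses onto $\Delta(\bar{\mathcal L})$. Consequently $\Gamma(\mathcal L)$ and $\Delta(\bar{\mathcal L})$ have the same simple homotopy type.
   Context: For a finite lattice $\mathcal L$ with minimum $\hat0$ and maximum $\hat1$, $\bar{\mathcal L}=\mathcal L\setminus\{\hat0,\hat1\}$, and $\mathcal A(\mathcal L)$ is the set of atoms (elements covering $\hat0$). $\mathcal L$ is atomic if every element is a join of atoms. The atom crosscut complex $\Gamma(\mathcal L)$ is the simplicial complex with vertex set $\mathcal A(\mathcal L)$ whose simplices are the nonempty subsets $\sigma\subseteq\mathcal A(\mathcal L)$ with $\bigvee\sigma\neq\hat1$. $\mathcal F(X)$ is the face poset, ${\rm Bd}(X)=\Delta(\mathcal F(X))$ the barycentric subdivision, $\Delta(Q)$ the order complex (simplices = nonempty chains). Same simple homotopy type means connected by a finite sequence of elementary collapses and expansions. *)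

From Stdlib Require Import Relations.
From HB Require Import structures.
From mathcomp Require Import all_boot all_order.
Set Implicit Arguments. Unset Strict Implicit. Unset Printing Implicit Defensive.
Import Order.TTheory.
Local Open Scope order_scope.

Definition is_complex (V : finType) (K : {set {set V}}) : bool :=
  [forall s in K, (s != set0) &&
     [forall t : {set V}, ((t != set0) && (t \subset s)) ==> (t \in K)]].

Definition elementary_collapse (V : finType) (K K' : {set {set V}}) : Prop :=
  is_complex K /\
  exists s t : {set V},
    [/\ s \in K, t \in K, s \proper t & #|t| = #|s|.+1] /\
    (forall u, u \in K -> s \proper u -> u = t) /\
    K' = K :\ s :\ t.

Definition collapses (V : finType) (K K' : {set {set V}}) : Prop :=
  clos_refl_trans _ (@elementary_collapse V) K K'.

Definition cx_image (V W : finType) (f : V -> W) (K : {set {set V}})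
  : {set {set W}} := [set f @: (s : {set V}) | s in K].

(** Same simple homotopy type: the complexes (relabelled injectively into a
    common finite vertex type, so that new vertices created by expansions
    are available) are connected by a finite sequence of elementary
    collapses and elementary expansions (inverse collapses). *)
Definition same_simple_homotopy_type (V1 V2 : finType)
  (K1 : {set {set V1}}) (K2 : {set {set V2}}) : Prop :=
  exists (W : finType) (f1 : V1 -> W) (f2 : V2 -> W),
    [/\ injective f1, injective f2 &
        clos_refl_sym_trans _ (@elementary_collapse W)
          (cx_image f1 K1) (cx_image f2 K2)].

Definition order_complex (T : finType) (le : rel T) (P : {set T})
  : {set {set T}} :=
  [set c : {set T} | [&& c != set0, c \subset P &
     [forall x in c, forall y in c, le x y || le y x]]].

Definition Bd (V : finType) (X : {set {set V}}) : {set {set {set V}}} :=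
  order_complex (fun s t : {set V} => s \subset t) X.

Section Lat.
Context {d : Order.disp_t} {L : finTBLatticeType d}.

Definition is_atom (a : L) : bool :=
  (\bot < a) && [forall b : L, ~~ ((\bot < b) && (b < a))].

Definition atoms : {set L} := [set a | is_atom a].

Definition atomic : Prop :=
  forall x : L, exists S : {set L}, S \subset atoms /\ x = \join_(a in S) a.

Definition crosscut_complex : {set {set L}} :=
  [set s : {set L} | [&& s != set0, s \subset atoms &
                         \join_(a in s) a != \top]].

Definition proper_part : {set L} := [set x : L | (x != \bot) && (x != \top)].

Definition proper_part_complex : {set {set L}} :=
  order_complex (fun x y : L => x <= y) proper_part.

Definition atoms_below (x : L) : {set L} := [set a in atoms | a <= x].

End Lat.

From Stdlib Require Import Relations.
From HB Require Import structures.
From mathcomp Require Import all_boot all_order zify.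
Set Implicit Arguments. Unset Strict Implicit. Unset Printing Implicit Defensive.
Import Order.TTheory.

(* Both parts come from acyclic matchings, collapsed one pair at a time.  In
   Bd(Gamma(L)), a chain of faces containing a face S that is not closed (S is
   not the set of all atoms below \join S) is matched with itself plus or minus
   the closure of its largest non-closed face; the unmatched chains consist of
   closed faces, i.e. they are the images of the chains of L-bar.  For the
   simple homotopy type, Gamma(L) and Delta(L-bar) are both collapses of a
   "cylinder" on two copies of L, whose simplices are a set of atoms sigma
   together with a chain c of L-bar such that \join sigma is a non-top lower
   bound of c: matching with an atom below c leaves Gamma(L), matching with
   \join sigma leaves Delta(L-bar). *)

Section Collapses.
Variable V : finType.
Implicit Types (K A : {set {set V}}) (s t u : {set V}).

Lemma complexP K : reflect (forall s, s \in K -> s != set0 /\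
   forall t, t != set0 -> t \subset s -> t \in K) (is_complex K).
Proof.
apply: (iffP forallP) => [cK s sK | cK s].
  have /implyP/(_ sK)/andP[-> /forallP sub] := cK s; split=> // t t0 ts.
  by have := sub t; rewrite t0 ts.
apply/implyP=> sK; have [-> sub] := cK s sK; apply/forallP=> t.
by apply/implyP=> /andP[]; apply: sub.
Qed.

Lemma complex_subset K s t : is_complex K -> s \in K -> t != set0 -> t \subset s ->
  t \in K.
Proof. by move=> /complexP cK /cK[_]; apply. Qed.

Lemma elementary_collapse_complex K s t : is_complex K -> s \in K -> t \in K ->
  s \proper t -> #|t| = #|s|.+1 ->
  (forall u, u \in K -> s \proper u -> u = t) ->
  elementary_collapse K (K :\ s :\ t) /\ is_complex (K :\ s :\ t).
Proof.
move=> cK sK tK st ct free; split; first by split=> //; exists s, t.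
move/complexP: cK => cK; apply/complexP => u; rewrite !inE => /and3P[ut us uK].
have [u0 sub] := cK u uK; split=> // r r0 ru; rewrite !inE sub // andbT.
apply/andP; split; apply: contraNneq ut => rE; subst r; apply/eqP/free => //.
  exact: proper_sub_trans st ru.
by rewrite properEneq eq_sym us.
Qed.

(* Collapsing the pair of maximal weight first: the weight condition makes
   its lower face free, and the hypotheses persist for the remaining pairs. *)
Lemma collapses_matching (w : {set V} -> nat) (v : {set V} -> V) K A :
  is_complex K -> A \subset K ->
  (forall s, s \in A -> v s \notin s) ->
  (forall s, s \in A -> v s |: s \in K) ->
  (forall s r, s \in A -> r \in A -> v r |: r != s) ->
  (forall s u, s \in A -> u \in K -> s \proper u ->
     u \in A \/ exists2 r, r \in A & u = v r |: r) ->
  (forall s r, s \in A -> r \in A -> s != r -> s \subset v r |: r ->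
     w s < w r) ->
  collapses K (K :\: (A :|: [set v s |: s | s in A])).
Proof.
move cardA: #|A| => n; elim: n K A cardA => [|n IH] K A cardA cK AK vs vsK vsA up wlt.
  by move/eqP: cardA; rewrite cards_eq0 => /eqP->; rewrite imset0 setU0 setD0;
    apply: rt_refl.
have [s0 s0A] : {s0 | s0 \in A}.
  by case: (pickP (mem A)) => [x xA|/eq_card0]; [exists x | rewrite cardA].
have [s sA smax] := arg_maxnP w s0A; have {}sA : s \in A := sA.
set t := v s |: s.
have not_below r : r \in A -> r != s -> ~~ (s \subset v r |: r).
  move=> rA rs; apply/negP => /(wlt s r sA rA); rewrite eq_sym rs => /(_ isT).
  by rewrite ltnNge => /negP; apply; apply: smax.
have sK : s \in K by apply: (subsetP AK).
have st : s \proper t by rewrite properUr ?sub1set ?vs.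
have free u : u \in K -> s \proper u -> u = t.
  move=> uK su; have [uA | [r rA ur]] := up s u sA uK su.
    have us : u != s by rewrite eq_sym proper_neq.
    have/negP[] := not_below u uA us.
    exact: subset_trans (proper_sub su) (subsetUr _ _).
  have [rs|rs] := eqVneq r s; first by rewrite ur rs.
  by have/negP[] := not_below r rA rs; rewrite -ur proper_sub.
have ct : #|t| = #|s|.+1 by rewrite cardsU1 vs.
have [collapse_st cK'] := elementary_collapse_complex cK sK (vsK s sA) st ct free.
have tA r : r \in A -> r != t by move=> rA; rewrite eq_sym vsA.
have -> : K :\: (A :|: [set v s |: s | s in A]) =
    (K :\ s :\ t) :\: (A :\ s :|: [set v s |: s | s in A :\ s]).
  rewrite -{1 2}(setD1K sA) imsetU1 -/t; apply/setP => x; rewrite !inE.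
  by case: (x == s); case: (x == t); case: (x \in A); case: (x \in K);
    case: (x \in [set v s |: s | s in A :\ s]).
apply: rt_trans (rt_step _ _ _ _ collapse_st) (IH _ _ _ cK' _ _ _ _ _ _) => //.
- by move: cardA; rewrite (cardsD1 s) sA => -[].
- by apply/subsetP=> r /setD1P[rs rA]; rewrite !inE rs tA ?(subsetP AK).
- by move=> r /setD1P[_ /vs].
- move=> r /setD1P[rs rA]; rewrite !inE vsK // (vsA s r) // !andbT.
  by apply: contraNneq (not_below r rA rs) => ->; apply: subsetUr.
- by move=> r r' /setD1P[_ /vsA] vsr /setD1P[_] /vsr.
- move=> r u /setD1P[_ rA] /setD1P[ut /setD1P[us uK]] ru.
  have [uA | [r' r'A ur']] := up r u rA uK ru; first by left; apply/setD1P.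
  right; exists r' => //; apply/setD1P; split=> //.
  by apply: contraNneq ut => r's; rewrite ur' r's.
- by move=> r r' /setD1P[_ rA] /setD1P[_ r'A]; apply: wlt.
Qed.
End Collapses.

(* Each simplex s with P s is matched with s plus or minus f (key s).  The key
   is unchanged by the matching and grows along it, so the weight
   (#|key s|, #|s|), ordered lexicographically, makes the matching acyclic. *)
Section KeyedPairing.
Variables (V T : finType) (K : {set {set V}}) (P : pred {set V}).
Variables (key : {set V} -> {set T}) (f : {set T} -> V).
Implicit Types s r u : {set V}.
Let v s := f (key s).

Hypothesis K_complex : is_complex K.
Hypothesis P_subset : forall s u, u \in K -> s \subset u -> P s -> P u.
Hypothesis pair_in : forall s, s \in K -> P s -> v s |: s \in K.
Hypothesis unpair_in : forall s, s \in K -> P s -> v s \in s ->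
  s :\ v s \in K /\ P (s :\ v s).
Hypothesis key_pair : forall s, s \in K -> P s -> key (v s |: s) = key s.
Hypothesis key_unpair : forall s, s \in K -> P s -> v s \in s ->
  key (s :\ v s) = key s.
Hypothesis key_sub : forall s r, s \in K -> r \in K -> P s -> P r ->
  s \subset v r |: r -> key s \subset key r.

Let A := [set s in K | P s && (v s \notin s)].

Lemma mem_paired u : u \in K -> P u -> u \in A \/ exists2 r, r \in A & u = v r |: r.
Proof.
move=> uK Pu; have [vu|vu] := boolP (v u \in u); last by left; rewrite inE uK Pu vu.
have [u'K Pu'] := unpair_in uK Pu vu.
have vu' : v (u :\ v u) = v u by rewrite /v key_unpair.
right; exists (u :\ v u); last by rewrite vu' setD1K.
by rewrite /A inE u'K Pu' vu' setD11.
Qed.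

Lemma collapses_keyed_pairing : collapses K [set s in K | ~~ P s].
Proof.
pose N := #|V|.+1.
have -> : [set s in K | ~~ P s] = K :\: (A :|: [set v s |: s | s in A]).
  apply/setP => s; rewrite !inE; have [sK|] := boolP (s \in K); last by rewrite andbF.
  rewrite andbT; apply/idP/idP => [nPs|].
    rewrite negb_or (negbTE nPs) /=; apply/imsetP => -[r].
    rewrite /A inE => /and3P[rK Pr _] sr.
    by move: nPs; rewrite sr (P_subset (pair_in rK Pr) (subsetUr _ _) Pr).
  apply: contraNN => Ps; have [sA|[r rA ->]] := mem_paired sK Ps.
    by move: sA; rewrite /A inE sK => ->.
  by apply/orP; right; apply/imsetP; exists r.
apply: (@collapses_matching _ (fun s => #|key s| * N + #|s|) v).
- exact: K_complex.
- by apply/subsetP => s; rewrite /A inE => /andP[].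
- by move=> s; rewrite /A inE => /and3P[].
- by move=> s; rewrite /A inE => /and3P[sK Ps _]; apply: pair_in.
- move=> s r; rewrite /A !inE => /and3P[_ _ vs] /and3P[rK Pr _].
  by apply: contraNneq vs => <-; rewrite {1}/v key_pair // setU11.
- move=> s u; rewrite /A inE => /and3P[sK Ps _] uK su.
  exact: mem_paired uK (P_subset uK (proper_sub su) Ps).
move=> s r; rewrite /A !inE => /and3P[sK Ps vs] /and3P[rK Pr _] sr svr.
have ltN (x : {set V}) : #|x| < N by rewrite ltnS max_card.
have [key_eq|key_neq] := eqVneq (key s) (key r); last first.
  have : #|key s| < #|key r| by rewrite proper_card // properEneq key_neq key_sub.
  by have := ltN s; have := ltN r; nia.
have sr' : s \proper r.
  rewrite properEneq sr; apply/subsetP => x xs; move/subsetP: svr => /(_ x xs).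
  by rewrite in_setU1 => /orP[/eqP xv|//]; move: vs; rewrite {1}/v key_eq -/(v r) -xv xs.
by rewrite key_eq ltn_add2l proper_card.
Qed.

End KeyedPairing.

Definition is_chain (T : finType) (le : rel T) (c : {set T}) : bool :=
  [forall x in c, forall y in c, le x y || le y x].

Section Chains.
Variables (T : finType) (le : rel T).
Implicit Types (c P : {set T}).

Lemma is_chainP c : reflect {in c &, forall x y, le x y || le y x} (is_chain le c).
Proof.
apply: (iffP forallP) => [ch x y xc yc | ch x].
  by have /implyP/(_ xc)/forallP/(_ y)/implyP/(_ yc) := ch x.
by apply/implyP => xc; apply/forallP => y; apply/implyP; apply: ch.
Qed.

Lemma is_chain_sub c c' : c' \subset c -> is_chain le c -> is_chain le c'.
Proof.
by move=> /subsetP sub /is_chainP ch; apply/is_chainP => x y /sub xc /sub; apply: ch.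
Qed.

Lemma order_complexE P c :
  (c \in order_complex le P) = [&& c != set0, c \subset P & is_chain le c].
Proof. by rewrite inE. Qed.

Lemma order_complex_complex P : is_complex (order_complex le P).
Proof.
apply/complexP => c; rewrite order_complexE => /and3P[c0 cP ch].
split=> // c' c'0 c'c; rewrite order_complexE c'0 (subset_trans c'c cP).
exact: is_chain_sub ch.
Qed.

End Chains.

Lemma chain_min d (T : finPOrderType d) (c : {set T}) :
  c != set0 -> is_chain <=%O c -> exists2 m, m \in c & forall y, y \in c -> (m <= y)%O.
Proof.
move=> /set0Pn[x0 x0c] /is_chainP ch.
have [m mc mmin] := arg_minnP (fun y => #|[set z | (z < y)%O]|) x0c.
exists m => // y yc; have /orP[//|ym] := ch m y mc yc.
have [-> //|ne] := eqVneq y m.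
have ltym : (y < m)%O by rewrite lt_neqAle ne.
have := mmin y yc; apply: contraTT => _; rewrite -ltnNge proper_card //.
rewrite properE; apply/andP; split.
  by apply/subsetP => z; rewrite !inE => /lt_trans; apply.
by apply/subsetP => /(_ y); rewrite !inE ltym ltxx => /(_ isT).
Qed.

Lemma bigcup_chain_mem (T : finType) (c : {set {set T}}) (Q : pred {set T}) :
  is_chain (fun x y : {set T} => x \subset y) c -> (exists2 x, x \in c & Q x) ->
  \bigcup_(x in c | Q x) x \in [set x in c | Q x].
Proof.
move=> /is_chainP ch [x0 x0c Qx0].
have [|m cQm mmax] := @arg_maxnP _ x0 [pred x in [set x in c | Q x]] (fun x => #|x|).
  by rewrite /= inE x0c.
suff -> : \bigcup_(x in c | Q x) x = m by [].
move: cQm; rewrite /= inE => /andP[mc Qm].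
apply/eqP; rewrite eqEsubset (bigcup_sup m) ?mc // andbT.
apply/bigcupsP => y /andP[yc Qy]; have /orP[//|my] := ch y m yc mc.
have le_ym : #|y| <= #|m| by apply: mmax; rewrite /= inE yc.
by have /eqP <- : m == y by rewrite eqEcard my le_ym.
Qed.

Section AtomicLattice.
Context {d : Order.disp_t} {L : finTBLatticeType d}.
Local Open Scope order_scope.
Implicit Types (x y : L) (S : {set L}).

Lemma atoms_belowP x a : reflect (a \in atoms /\ a <= x) (a \in atoms_below x).
Proof. by rewrite /atoms_below inE; apply: andP. Qed.

Lemma atoms_below_sub x : atoms_below x \subset atoms.
Proof. by apply/subsetP => a /atoms_belowP[]. Qed.

Lemma atom_gt0 (a : L) : a \in atoms -> \bot < a.
Proof. by rewrite inE => /andP[]. Qed.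

Lemma join_atoms_ne_bot S : S \subset atoms -> S != set0 -> \join_(a in S) a != \bot.
Proof.
move=> /subsetP SA /set0Pn[a aS]; rewrite -lt0x.
by apply: lt_le_trans (atom_gt0 (SA a aS)) _; apply: joins_sup.
Qed.

Hypothesis L_atomic : @atomic d L.

Lemma join_atoms_below x : \join_(a in atoms_below x) a = x.
Proof.
have [S [SA Ex]] := L_atomic x; apply/eqP; rewrite eq_le.
apply/andP; split; first by apply/joinsP => a /atoms_belowP[].
rewrite {1}Ex le_joins //; apply/subsetP => a aS; apply/atoms_belowP.
by split; [apply: (subsetP SA) | rewrite Ex joins_sup].
Qed.

Lemma atoms_below_subset x y : (atoms_below x \subset atoms_below y) = (x <= y).
Proof.
apply/idP/idP => [sub | le_xy].
  by rewrite -(join_atoms_below x) -(join_atoms_below y) le_joins.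
apply/subsetP => a /atoms_belowP[aA le_ax]; apply/atoms_belowP.
by split; last exact: le_trans le_ax le_xy.
Qed.

Lemma atoms_below_neq0 x : x != \bot -> atoms_below x != set0.
Proof. by apply: contraNneq => x0; rewrite -(join_atoms_below x) x0 big_set0. Qed.

End AtomicLattice.

Section SumParts.
Variables A B : finType.
Implicit Types s t : {set A + B}.

Definition lpart s : {set A} := inl @^-1: s.
Definition rpart s : {set B} := inr @^-1: s.

Lemma lpart_subset s t : s \subset t -> lpart s \subset lpart t.
Proof. exact: preimsetS. Qed.
Lemma rpart_subset s t : s \subset t -> rpart s \subset rpart t.
Proof. exact: preimsetS. Qed.

Lemma lpart_neq0 s : lpart s != set0 -> s != set0.
Proof. by apply: contraNneq => ->; apply/eqP/preimset0. Qed.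
Lemma rpart_neq0 s : rpart s != set0 -> s != set0.
Proof. by apply: contraNneq => ->; apply/eqP/preimset0. Qed.

Lemma lpart_setU1l a s : lpart (inl a |: s) = a |: lpart s.
Proof. by apply/setP => x; rewrite !inE. Qed.
Lemma lpart_setU1r b s : lpart (inr b |: s) = lpart s.
Proof. by apply/setP => x; rewrite !inE. Qed.
Lemma lpart_setD1r b s : lpart (s :\ inr b) = lpart s.
Proof. by apply/setP => x; rewrite !inE. Qed.
Lemma rpart_setU1l a s : rpart (inl a |: s) = rpart s.
Proof. by apply/setP => x; rewrite !inE. Qed.
Lemma rpart_setU1r b s : rpart (inr b |: s) = b |: rpart s.
Proof. by apply/setP => x; rewrite !inE. Qed.
Lemma rpart_setD1l a s : rpart (s :\ inl a) = rpart s.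
Proof. by apply/setP => x; rewrite !inE. Qed.

Lemma lpart_inl (S : {set A}) : lpart (inl @: S) = S.
Proof. by apply/setP => x; rewrite inE mem_imset //; apply: inl_inj. Qed.
Lemma rpart_inl (S : {set A}) : rpart (inl @: S) = set0.
Proof. by apply/setP => x; rewrite !inE; apply/imsetP => -[]. Qed.
Lemma lpart_inr (S : {set B}) : lpart (inr @: S) = set0.
Proof. by apply/setP => x; rewrite !inE; apply/imsetP => -[]. Qed.
Lemma rpart_inr (S : {set B}) : rpart (inr @: S) = S.
Proof. by apply/setP => x; rewrite inE mem_imset //; apply: inr_inj. Qed.

Lemma rpart_eq0 s : rpart s = set0 -> s = inl @: lpart s.
Proof.
move=> r0; apply/setP => -[a|b]; first by rewrite mem_imset ?inE //; apply: inl_inj.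
apply/idP/imsetP => [bs|[]//]; by move/setP: r0 => /(_ b); rewrite !inE bs.
Qed.

Lemma lpart_eq0 s : lpart s = set0 -> s = inr @: rpart s.
Proof.
move=> l0; apply/setP => -[a|b]; last by rewrite mem_imset ?inE //; apply: inr_inj.
apply/idP/imsetP => [as_|[]//]; by move/setP: l0 => /(_ a); rewrite !inE as_.
Qed.

End SumParts.

Section Cylinder.
Context {d : Order.disp_t} {L : finTBLatticeType d}.
Local Open Scope order_scope.
Implicit Types (s : {set L + L}) (c S : {set L}) (x y z : L).

Definition proper_lower_bound z c : bool := (z != \top) && [forall y in c, z <= y].

Lemma proper_lower_boundP z c :
  reflect (z != \top /\ forall y, y \in c -> z <= y) (proper_lower_bound z c).
Proof.
apply: (iffP andP) => -[zT zc]; split=> //.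
  by move=> y yc; move/forallP: zc => /(_ y)/implyP; apply.
by apply/forallP => y; apply/implyP/zc.
Qed.

Lemma proper_lower_boundW z z' c c' : z' <= z -> c' \subset c ->
  proper_lower_bound z c -> proper_lower_bound z' c'.
Proof.
move=> le_z'z /subsetP c'c /proper_lower_boundP[zT zc]; apply/proper_lower_boundP.
split=> [|y /c'c yc]; last exact: le_trans le_z'z (zc y yc).
by apply: contraNneq zT => z'T; rewrite -le1x -z'T.
Qed.

Definition cylinder : {set {set L + L}} :=
  [set s | [&& s != set0, lpart s \subset atoms, rpart s \subset proper_part,
               is_chain <=%O (rpart s) &
               proper_lower_bound (\join_(a in lpart s) a) (rpart s)]].

Lemma cylinder_complex : is_complex cylinder.
Proof.
apply/complexP => s; rewrite inE => /and5P[s0 sA sP ch lb].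
split=> // t t0 ts; have lts := lpart_subset ts; have rts := rpart_subset ts.
rewrite inE t0 (subset_trans lts sA) (subset_trans rts sP) (is_chain_sub rts ch) /=.
exact: proper_lower_boundW (le_joins _ lts) rts lb.
Qed.

Lemma proper_part_cylinder :
  cx_image inr proper_part_complex = [set s in cylinder | lpart s == set0].
Proof.
apply/setP => s; rewrite inE; apply/imsetP/andP => [[c] | [sC /eqP l0]].
  rewrite order_complexE => /and3P[c0 cP ch] ->.
  rewrite lpart_inr eqxx inE imset_eq0 c0 lpart_inr rpart_inr cP ch sub0set big_set0.
  split=> //; apply/proper_lower_boundP; split=> [|y _]; last exact: le0x.
  have /set0Pn[y /(subsetP cP)] := c0; rewrite inE => /andP[yb _].
  by apply/negP => /eqP bT; move: yb; rewrite -lex0 bT lex1.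
exists (rpart s); last exact: lpart_eq0.
move: sC; rewrite inE order_complexE => /and5P[s0 _ sP ch _]; rewrite sP ch !andbT.
by apply: contraNneq s0 => r0; rewrite (lpart_eq0 l0) r0 imset0.
Qed.

Lemma crosscut_cylinder :
  cx_image inl crosscut_complex = [set s in cylinder | rpart s == set0].
Proof.
apply/setP => s; rewrite inE; apply/imsetP/andP => [[S] | [sC /eqP r0]].
  rewrite inE => /and3P[S0 SA ST] ->.
  rewrite rpart_inl eqxx inE imset_eq0 S0 lpart_inl rpart_inl SA sub0set /=.
  split=> //; apply/andP; split; first by apply/is_chainP => x; rewrite inE.
  by apply/proper_lower_boundP; split=> // y; rewrite inE.
exists (lpart s); last exact: rpart_eq0.
move: sC; rewrite !inE => /and5P[s0 sA _ _ /proper_lower_boundP[jT _]].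
rewrite sA jT !andbT; apply: contraNneq s0 => l0.
by rewrite (rpart_eq0 r0) l0 imset0.
Qed.

Lemma cylinder_add_join s : s \in cylinder -> lpart s != set0 ->
  inr (\join_(a in lpart s) a) |: s \in cylinder.
Proof.
rewrite !inE => /and5P[_ sA sP ch /proper_lower_boundP[jT lb]] l0.
rewrite lpart_setU1r rpart_setU1r sA subUset sub1set sP inE join_atoms_ne_bot //.
rewrite jT /=; apply/and3P; split.
- by apply/set0Pn; exists (inr (\join_(a in lpart s) a)); apply: setU11.
- apply/is_chainP => x y; rewrite !in_setU1.
  move=> /predU1P[->|xc] /predU1P[->|yc]; rewrite ?lexx ?lb ?orbT //.
  exact: (is_chainP _ _ ch).
- apply/proper_lower_boundP; split=> // y; rewrite in_setU1.
  by case/predU1P => [->|/lb].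
Qed.

Lemma cylinder_collapses_proper_part :
  collapses cylinder (cx_image inr proper_part_complex).
Proof.
have -> : cx_image inr proper_part_complex =
    [set s in cylinder | ~~ (lpart s != set0)].
  by rewrite proper_part_cylinder; apply/setP => s; rewrite !inE negbK.
apply: (collapses_keyed_pairing (P := fun s => lpart s != set0) (key := @lpart _ _)
  (f := fun S => inr (\join_(a in S) a))).
- exact: cylinder_complex.
- by move=> s u _ /lpart_subset; apply: subset_neq0.
- exact: cylinder_add_join.
- move=> s sC l0 _; rewrite lpart_setD1r; split=> //.
  apply: complex_subset cylinder_complex sC _ (subD1set _ _).
  by apply: lpart_neq0; rewrite lpart_setD1r.
- by move=> s _ _; rewrite lpart_setU1r.
- by move=> s _ _ _; rewrite lpart_setD1r.
- by move=> s r _ _ _ _ /lpart_subset; rewrite lpart_setU1r.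
Qed.

Hypothesis L_atomic : @atomic d L.

Definition lower_atom c : L := odflt \bot [pick a in atoms | [forall y in c, a <= y]].

Lemma lower_atom_spec c : c != set0 -> c \subset proper_part -> is_chain <=%O c ->
  lower_atom c \in atoms /\ forall y, y \in c -> lower_atom c <= y.
Proof.
move=> c0 cP ch; have [m mc mmin] := chain_min c0 ch.
have mb : m != \bot by move: (subsetP cP m mc); rewrite inE => /andP[].
have /set0Pn[a /atoms_belowP[aA am]] := atoms_below_neq0 L_atomic mb.
rewrite /lower_atom; case: pickP => [b /andP[bA /forallP bc] | /(_ a)] /=.
  by split=> // y yc; have /implyP := bc y; apply.
rewrite aA /= => /negbT/negP[]; apply/forallP => y; apply/implyP => yc.
exact: le_trans am (mmin y yc).
Qed.

Lemma cylinder_add_lower_atom s : s \in cylinder -> rpart s != set0 ->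
  inl (lower_atom (rpart s)) |: s \in cylinder.
Proof.
rewrite !inE => /and5P[_ sA sP ch /proper_lower_boundP[_ lb]] r0.
have [aA a_le] := lower_atom_spec r0 sP ch.
set a := lower_atom _.
have join_le y : y \in rpart s -> \join_(b in a |: lpart s) b <= y.
  move=> yc; apply/joinsP => b; rewrite in_setU1 => /predU1P[->|bs]; first exact: a_le.
  by apply: le_trans _ (lb y yc); apply: joins_sup.
rewrite lpart_setU1l rpart_setU1l subUset sub1set aA sA sP ch /=; apply/andP; split.
  by apply/set0Pn; exists (inl a); apply: setU11.
apply/proper_lower_boundP; split=> //; have /set0Pn[y yc] := r0.
apply: contraTneq (join_le y yc) => ->; rewrite le1x.
by move: (subsetP sP y yc); rewrite inE => /andP[].
Qed.

Lemma cylinder_collapses_crosscut :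
  collapses cylinder (cx_image inl crosscut_complex).
Proof.
have -> : cx_image inl crosscut_complex =
    [set s in cylinder | ~~ (rpart s != set0)].
  by rewrite crosscut_cylinder; apply/setP => s; rewrite !inE negbK.
apply: (collapses_keyed_pairing (P := fun s => rpart s != set0) (key := @rpart _ _)
  (f := fun c => inl (lower_atom c))).
- exact: cylinder_complex.
- by move=> s u _ /rpart_subset; apply: subset_neq0.
- exact: cylinder_add_lower_atom.
- move=> s sC r0 _; rewrite rpart_setD1l; split=> //.
  apply: complex_subset cylinder_complex sC _ (subD1set _ _).
  by apply: rpart_neq0; rewrite rpart_setD1l.
- by move=> s _ _; rewrite rpart_setU1l.
- by move=> s _ _ _; rewrite rpart_setD1l.
- by move=> s r _ _ _ _ /rpart_subset; rewrite rpart_setU1l.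
Qed.

End Cylinder.

Section Subdivision.
Context {d : Order.disp_t} {L : finTBLatticeType d}.
Local Open Scope order_scope.
Hypothesis L_atomic : @atomic d L.
Implicit Types (S X Y : {set L}) (c : {set {set L}}).

Local Notation Gamma := (@crosscut_complex d L).

Definition atom_closure S : {set L} := atoms_below (\join_(a in S) a).
Definition atom_closed S : bool := atom_closure S == S.

Lemma atoms_below_closed x : atom_closed (atoms_below x).
Proof. by rewrite /atom_closed /atom_closure join_atoms_below. Qed.

Lemma atom_closure_closed S : atom_closed (atom_closure S).
Proof. exact: atoms_below_closed. Qed.

Lemma sub_atom_closure S : S \subset atoms -> S \subset atom_closure S.
Proof.
by move=> /subsetP SA; apply/subsetP => a aS; apply/atoms_belowP; rewrite SA ?joins_sup.
Qed.

Lemma atom_closure_min S Y : atom_closed Y -> S \subset Y -> atom_closure S \subset Y.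
Proof. by move=> /eqP cY SY; rewrite -cY /atom_closure atoms_below_subset // le_joins. Qed.

Lemma atom_closure_crosscut S : S \in Gamma -> atom_closure S \in Gamma.
Proof.
rewrite !inE => /and3P[S0 SA ST]; rewrite join_atoms_below // ST atoms_below_sub.
by rewrite (subset_neq0 (sub_atom_closure SA)).
Qed.

Lemma atoms_below_crosscut x : x \in proper_part -> atoms_below x \in Gamma.
Proof.
rewrite !inE => /andP[xb xT].
by rewrite join_atoms_below // xT atoms_below_sub atoms_below_neq0.
Qed.

Definition has_nonclosed c : bool := [exists X in c, ~~ atom_closed X].
Definition nonclosed_part c : {set L} := \bigcup_(X in c | ~~ atom_closed X) X.

Lemma has_nonclosedP c :
  reflect (exists2 X, X \in c & ~~ atom_closed X) (has_nonclosed c).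
Proof. exact: exists_inP. Qed.

Lemma nonclosed_part_subset c c' :
  c \subset c' -> nonclosed_part c \subset nonclosed_part c'.
Proof.
move=> /subsetP cc'; apply/bigcupsP => X /andP[Xc nX].
by apply: bigcup_sup; rewrite cc'.
Qed.

Lemma nonclosed_part_setU1 c Y :
  atom_closed Y -> nonclosed_part (Y |: c) = nonclosed_part c.
Proof.
move=> cY; apply: eq_bigl => X; rewrite in_setU1.
by have [->|] := eqVneq X Y; rewrite ?cY ?andbF.
Qed.

Lemma nonclosed_part_setD1 c Y :
  atom_closed Y -> nonclosed_part (c :\ Y) = nonclosed_part c.
Proof.
move=> cY; apply: eq_bigl => X; rewrite in_setD1.
by have [->|] := eqVneq X Y; rewrite ?cY ?andbF.
Qed.

Lemma nonclosed_part_mem c : c \in Bd Gamma -> has_nonclosed c ->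
  nonclosed_part c \in c /\ ~~ atom_closed (nonclosed_part c).
Proof.
rewrite order_complexE => /and3P[_ _ ch] /has_nonclosedP[X Xc nX].
have := bigcup_chain_mem (Q := fun X => ~~ atom_closed X) ch (ex_intro2 _ _ X Xc nX).
by rewrite inE => /andP.
Qed.

Lemma subdivision_add_closure c : c \in Bd Gamma -> has_nonclosed c ->
  atom_closure (nonclosed_part c) |: c \in Bd Gamma.
Proof.
move=> cB hc; have [Xc nX] := nonclosed_part_mem cB hc.
move: cB; rewrite !order_complexE => /and3P[c0 cG /is_chainP ch].
set X := nonclosed_part c in Xc nX *.
have XA : X \subset atoms by move: (subsetP cG X Xc); rewrite inE => /and3P[].
have cmp Y : Y \in c -> (Y \subset atom_closure X) || (atom_closure X \subset Y).
  move=> Yc; have [cY|nY] := boolP (atom_closed Y).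
    have /orP[YX|XY] := ch Y X Yc Xc; last by rewrite atom_closure_min ?orbT.
    by rewrite (subset_trans YX (sub_atom_closure XA)).
  apply/orP; left; apply: subset_trans (sub_atom_closure XA).
  by apply: bigcup_sup; rewrite Yc.
apply/and3P; split.
- by apply/set0Pn; exists (atom_closure X); apply: setU11.
- by rewrite subUset sub1set atom_closure_crosscut ?(subsetP cG).
apply/is_chainP => Y Z; rewrite !in_setU1.
move=> /predU1P[->|Yc] /predU1P[->|Zc].
- by rewrite subxx.
- by rewrite orbC cmp.
- exact: cmp.
- exact: ch.
Qed.

Lemma proper_part_subdivision :
  cx_image (@atoms_below d L) proper_part_complex =
  [set c in Bd Gamma | ~~ has_nonclosed c].
Proof.
apply/setP => c; rewrite inE; apply/imsetP/andP => [[C] | [cB nh]].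
  rewrite order_complexE => /and3P[C0 CP /is_chainP ch] ->.
  split; last by apply/has_nonclosedP => -[_ /imsetP[x _ ->]]; rewrite atoms_below_closed.
  rewrite order_complexE imset_eq0 C0 /=; apply/andP; split.
    by apply/subsetP => _ /imsetP[x xC ->]; rewrite atoms_below_crosscut ?(subsetP CP).
  apply/is_chainP => _ _ /imsetP[x xC ->] /imsetP[y yC ->].
  by rewrite !atoms_below_subset; have := ch x y xC yC.
move: cB; rewrite order_complexE => /and3P[c0 cG /is_chainP ch].
have closed X : X \in c -> atoms_below (\join_(a in X) a) = X.
  by move=> Xc; apply/eqP; apply: contraNT nh => nX; apply/has_nonclosedP; exists X.
exists [set \join_(a in X) a | X : {set L} in c].
  rewrite order_complexE imset_eq0 c0 /=; apply/andP; split.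
    apply/subsetP => _ /imsetP[X Xc ->]; move: (subsetP cG X Xc).
    by rewrite !inE => /and3P[X0 XA ->]; rewrite join_atoms_ne_bot.
  apply/is_chainP => _ _ /imsetP[X Xc ->] /imsetP[Y Yc ->].
  have /orP[XY|YX] := ch X Y Xc Yc; first by rewrite le_joins.
  by rewrite orbC le_joins.
rewrite -imset_comp -[LHS]imset_id; apply: eq_in_imset => X Xc.
by rewrite /= closed.
Qed.

Lemma subdivision_collapses_proper_part :
  collapses (Bd Gamma) (cx_image (@atoms_below d L) proper_part_complex).
Proof.
rewrite proper_part_subdivision.
apply: (collapses_keyed_pairing (P := has_nonclosed) (key := nonclosed_part)
  (f := atom_closure)).
- exact: order_complex_complex.
- move=> c c' _ /subsetP cc' /has_nonclosedP[X Xc nX].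
  by apply/has_nonclosedP; exists X; rewrite ?cc'.
- exact: subdivision_add_closure.
- move=> c cB hc _; have [Xc nX] := nonclosed_part_mem cB hc.
  have Xc' : nonclosed_part c \in c :\ atom_closure (nonclosed_part c).
    by rewrite in_setD1 Xc andbT; apply: contraNneq nX => ->; apply: atom_closure_closed.
  split; last by apply/has_nonclosedP; exists (nonclosed_part c).
  apply: complex_subset (order_complex_complex _ _) cB _ (subD1set _ _).
  by apply/set0Pn; exists (nonclosed_part c).
- by move=> c _ _; rewrite nonclosed_part_setU1 ?atom_closure_closed.
- by move=> c _ _ _; rewrite nonclosed_part_setD1 ?atom_closure_closed.
move=> c c' _ _ _ _ /nonclosed_part_subset.
by rewrite nonclosed_part_setU1 ?atom_closure_closed.
Qed.

End Subdivision.

Theorem mainTheorem2 (d : Order.disp_t) (L : finTBLatticeType d) :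
  @atomic d L ->
  collapses (Bd (@crosscut_complex d L))
            (cx_image (@atoms_below d L) (@proper_part_complex d L)) /\
  same_simple_homotopy_type (@crosscut_complex d L) (@proper_part_complex d L).
Proof.
move=> L_atomic; split; first exact: subdivision_collapses_proper_part.
exists (L + L)%type, inl, inr; split; [exact: inl_inj | exact: inr_inj |].
apply: rst_trans (clos_rt_clos_rst _ _ _ _ cylinder_collapses_proper_part).
exact/rst_sym/clos_rt_clos_rst/(cylinder_collapses_crosscut L_atomic).
Qed.
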